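(* Let $R$ be a ring with identity and $a,b,c\in R$. The following are equivalent: (i) $a$ is left $(b,c)$-invertible; (ii) $a^\circ\cap bR=\{0\}$, $abR\cap c^\circ=\{0\}$ and $R=Rca+{}^\circ b$; (iii) $a^\circ\cap bR=\{0\}$ and $R=Rca+{}^\circ b$; (iv) $abR\cap c^\circ=\{0\}$ and $R=Rca+{}^\circ b$; (v) $R=Rca+{}^\circ b$.
   Context: For $x\in R$: $xR=\{xr:r\in R\}$, $Rx=\{rx:r\in R\}$, $x^\circ=\{r: xr=0\}$, ${}^\circ x=\{r: rx=0\}$. The element $a$ is left $(b,c)$-invertible if there is $y\in R$ with $Ry\subseteq Rc$ and $yab=b$. *)

From mathcomp Require Import all_boot all_algebra.
Set Implicit Arguments. Unset Strict Implicit. Unset Printing Implicit Defensive.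
Import GRing.Theory.
Local Open Scope ring_scope.

(* R is a (possibly trivial) ring with identity: pzRingType. *)

Definition left_ideal_sub (R : pzRingType) (x y : R) : Prop :=
  forall r : R, exists s : R, r * x = s * y.

Definition left_bc_invertible (R : pzRingType) (a b c : R) : Prop :=
  exists y : R, left_ideal_sub y c /\ y * a * b = b.

Definition rann_cap_bR_trivial (R : pzRingType) (a b : R) : Prop :=
  forall x : R, a * x = 0 -> (exists r : R, x = b * r) -> x = 0.

Definition abR_cap_rann_trivial (R : pzRingType) (a b c : R) : Prop :=
  forall x : R, (exists r : R, x = a * b * r) -> c * x = 0 -> x = 0.

Definition R_eq_Rca_add_lann (R : pzRingType) (a b c : R) : Prop :=
  forall x : R, exists r z : R, z * b = 0 /\ x = r * (c * a) + z.

From mathcomp Require Import all_boot all_algebra.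
Set Implicit Arguments. Unset Strict Implicit. Unset Printing Implicit Defensive.
Import GRing.Theory.
Local Open Scope ring_scope.

(* Every condition reduces to the existence of r with r c a b = b: writing
   1 = r c a + z with z b = 0 gives it, and conversely any x splits as
   x r c a + x (1 - r c a).  Such an r makes left multiplication by c a
   injective on bR, which yields both annihilator conditions. *)

Section LeftBCInvertible.
Variables (R : pzRingType) (a b c : R).

Definition cab_left_unital := exists r : R, r * c * a * b = b.

Lemma R_eq_Rca_add_lannP : R_eq_Rca_add_lann a b c <-> cab_left_unital.
Proof.
split=> [dec1 | [r rcab] x].
  have [r [z [zb e1]]] := dec1 1; exists r.
  by rewrite -(mulrA r c a) -[b in RHS]mul1r e1 mulrDl zb addr0.
exists (x * r), (x - x * (r * (c * a))); split; last by rewrite -mulrA addrC subrK.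
have rcab_assoc : r * (c * a) * b = b by rewrite !mulrA.
by rewrite mulrBl -mulrA rcab_assoc subrr.
Qed.

Lemma left_bc_invertibleP : left_bc_invertible a b c <-> cab_left_unital.
Proof.
split=> [[y [yRc yab]] | [r rcab]].
  by have [r ry] := yRc 1; exists r; rewrite -ry mul1r.
exists (r * c); split=> // t; exists (t * r); exact: mulrA.
Qed.

Lemma cab_left_unital_cancel t :
  cab_left_unital -> c * (a * (b * t)) = 0 -> b * t = 0.
Proof.
by move=> [r rcab] cabt; rewrite -rcab -!mulrA cabt !mulr0.
Qed.

Lemma cab_left_unital_rann_cap_bR : cab_left_unital -> rann_cap_bR_trivial a b.
Proof.
by move=> unital x ax [t xbt]; rewrite xbt (cab_left_unital_cancel unital) // -xbt ax mulr0.
Qed.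

Lemma cab_left_unital_abR_cap_rann :
  cab_left_unital -> abR_cap_rann_trivial a b c.
Proof.
move=> unital _ [t ->]; rewrite -!mulrA => cabt.
by rewrite (cab_left_unital_cancel unital cabt) mulr0.
Qed.

End LeftBCInvertible.

Theorem theorem2p13 (R : pzRingType) (a b c : R) :
  let i   := left_bc_invertible a b c in
  let ii  := [/\ rann_cap_bR_trivial a b, abR_cap_rann_trivial a b c
                 & R_eq_Rca_add_lann a b c] in
  let iii := rann_cap_bR_trivial a b /\ R_eq_Rca_add_lann a b c in
  let iv  := abR_cap_rann_trivial a b c /\ R_eq_Rca_add_lann a b c in
  let v   := R_eq_Rca_add_lann a b c in
  [/\ (i <-> ii), (ii <-> iii), (iii <-> iv) & (iv <-> v)].
Proof.
move=> i ii iii iv v; rewrite {}/i {}/ii {}/iii {}/iv {}/v.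
have [i_unital unital_i] := left_bc_invertibleP a b c.
have [v_unital unital_v] := R_eq_Rca_add_lannP a b c.
have rann := @cab_left_unital_rann_cap_bR R a b c.
have abR := @cab_left_unital_abR_cap_rann R a b c.
split; split.
- by move=> /i_unital u; split; [exact: rann | exact: abR | exact: unital_v].
- by case=> _ _ /v_unital /unital_i.
- by case.
- by case=> ann dec; split=> //; exact/abR/v_unital.
- by case=> _ dec; split=> //; exact/abR/v_unital.
- by case=> _ dec; split=> //; exact/rann/v_unital.
- by case.
- by move=> dec; split=> //; exact/abR/v_unital.
Qed.
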